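(* Let $\mathbf P=(P,\leq,{}',0,1)$ be an orthogonal lub-complete poset. Then the following conditions are equivalent: (i) $\mathbf P$ is an orthomodular poset. (ii) $\mathbf P$ satisfies $x\leq y$ if and only if $x\rightarrow_S y=1$ for all $x,y\in P$. (iii) $\mathbf P$ satisfies $x\leq y$ if and only if $x\rightarrow_D y=1$ for all $x,y\in P$.
   Context: $(P,\leq,{}',0,1)$ is a bounded poset with an antitone involution ${}'$; orthogonal means $x\leq y'$ implies $x\vee y$ exists; lub-complete means for every lower bound $x$ of a finite subset $M$ there is a maximal lower bound of $M$ above $x$; orthomodular means orthogonal and $x\leq y$ implies $x\vee(y\wedge x')=y$. $L(x,y)$ is the set of common lower bounds and $\mathrm{Max}\,A$ the set of maximal elements of $A$; joins with sets are elementwise. Sasaki implication: $x\rightarrow_S y:=x'\vee \mathrm{Max}\,L(x,y)$; Dishkant implication: $x\rightarrow_D y:=y'\rightarrow_S x'=y\vee \mathrm{Max}\,L(x',y')$. ''$=1$'' means equal to $\{1\}$. *)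

From Stdlib Require Import List.
Import ListNotations.

Record bposet_ai := BPosetAI {
  car :> Type;
  le : car -> car -> Prop;
  cpl : car -> car;
  zero : car;
  one : car;
  le_refl : forall x, le x x;
  le_antisym : forall x y, le x y -> le y x -> x = y;
  le_trans : forall x y z, le x y -> le y z -> le x z;
  zero_le : forall x, le zero x;
  le_one : forall x, le x one;
  cpl_invol : forall x, cpl (cpl x) = x;
  cpl_anti : forall x y, le x y -> le (cpl y) (cpl x)
}.

Arguments le {_} _ _.
Arguments cpl {_} _.
Arguments zero {_}.
Arguments one {_}.

Section Defs.
Context {P : bposet_ai}.

Definition is_join (x y z : P) : Prop :=
  le x z /\ le y z /\ forall w, le x w -> le y w -> le z w.

Definition is_meet (x y z : P) : Prop :=
  le z x /\ le z y /\ forall w, le w x -> le w y -> le w z.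

Definition Lb (x y : P) : P -> Prop := fun z => le z x /\ le z y.

Definition Max (A : P -> Prop) : P -> Prop :=
  fun z => A z /\ forall w, A w -> le z w -> w = z.

(* Sasaki implication  x ->_S y := x' \/ Max L(x,y)  (elementwise joins) *)
Definition sasaki (x y : P) : P -> Prop :=
  fun z => exists m, Max (Lb x y) m /\ is_join (cpl x) m z.

Definition dishkant (x y : P) : P -> Prop := sasaki (cpl y) (cpl x).

Definition eq_one (A : P -> Prop) : Prop := forall z, A z <-> z = one.
End Defs.

Definition orthogonal (P : bposet_ai) : Prop :=
  forall x y : P, le x (cpl y) -> exists z, is_join x y z.

Definition lub_complete (P : bposet_ai) : Prop :=
  forall (M : list P) (x : P), (forall m, In m M -> le x m) ->
    exists z, Max (fun w => forall m, In m M -> le w m) z /\ le x z.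

Definition orthomodular (P : bposet_ai) : Prop :=
  orthogonal P /\
  forall x y : P, le x y -> exists m, is_meet y (cpl x) m /\ is_join x m y.

(** In an orthomodular poset [x' \/ x = 1], and [m <= x] with [x' \/ m = 1]
    forces [m = x], because the relative complement [x /\ m'] lies below [x']
    and [m'] and is therefore [0].  When [x <= y], [Max L(x,y) = {x}], so
    [x ->_S y = {x' \/ x} = 1]; conversely, if [x ->_S y = 1], a maximal lower
    bound [m] of [x, y] (lub-completeness) satisfies [x' \/ m = 1], so
    [x = m <= y].
    Assuming (ii), for [x <= y] put [m := (y' \/ x)' = y /\ x'] and [j := x \/ m].
    Then [y' \/ j = (y' \/ x) \/ m = m' \/ m = 1], i.e. [y ->_S j = 1], so
    [y <= j <= y].  The Dishkant case is the Sasaki case read through the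
    antitone involution. *)

From Stdlib Require Import List.
Import ListNotations.

Section BoundedPosetWithInvolution.
Context {P : bposet_ai}.
Implicit Types a b c k m s t x y : P.

Lemma le_cpl x y : le (cpl x) (cpl y) <-> le y x.
Proof.
  split; [|apply cpl_anti].
  intros H. apply cpl_anti in H. now rewrite !cpl_invol in H.
Qed.

Lemma le_cpl_r x y : le x (cpl y) -> le y (cpl x).
Proof. intros H. apply le_cpl. now rewrite cpl_invol. Qed.

Lemma cpl_one : cpl (one : P) = zero.
Proof.
  apply le_antisym; [|apply zero_le].
  rewrite <- (cpl_invol _ zero). apply le_cpl, le_one.
Qed.

Lemma is_join_unique a b s t : is_join a b s -> is_join a b t -> s = t.
Proof. intros (? & ? & Hs) (? & ? & Ht). apply le_antisym; auto. Qed.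

Lemma is_join_comm a b s : is_join a b s -> is_join b a s.
Proof. intros (? & ? & Hs). repeat split; auto. Qed.

Lemma is_join_assoc a b c s j t :
  is_join a b s -> is_join b c j -> is_join s c t -> is_join a j t.
Proof.
  intros (Has & Hbs & Hs) (Hbj & Hcj & Hj) (Hst & Hct & Ht).
  repeat split.
  - now apply le_trans with s.
  - apply Hj; [now apply le_trans with s | exact Hct].
  - intros u Hau Hju.
    apply Ht; [apply Hs|]; eauto using le_trans.
Qed.

Lemma is_meet_cpl_join a b s : is_join a b s -> is_meet (cpl a) (cpl b) (cpl s).
Proof.
  intros (Has & Hbs & Hs). repeat split.
  - now apply cpl_anti.
  - now apply cpl_anti.
  - intros w Hwa Hwb. apply le_cpl. rewrite cpl_invol.
    apply Hs; now apply le_cpl_r.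
Qed.

Lemma eq_zero_of_le_cpl_join_one a b k :
  is_join a b one -> le k (cpl a) -> le k (cpl b) -> k = zero.
Proof.
  intros (_ & _ & Hone) Hka Hkb.
  apply le_antisym; [|apply zero_le].
  rewrite <- cpl_one. apply le_cpl_r.
  apply Hone; now apply le_cpl_r.
Qed.

Lemma Max_Lb_of_le x y m : le x y -> Max (Lb x y) m <-> m = x.
Proof.
  intros Hxy. split.
  - intros ((Hmx & _) & Hmax). symmetry.
    apply Hmax; [split; [apply le_refl | exact Hxy] | exact Hmx].
  - intros ->. split; [split; [apply le_refl | exact Hxy]|].
    intros w (Hwx & _) Hxw. now apply le_antisym.
Qed.

Lemma Max_Lb_of_ge x y m : le y x -> Max (Lb x y) m <-> m = y.
Proof.
  intros Hyx. split.
  - intros ((_ & Hmy) & Hmax). symmetry.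
    apply Hmax; [split; [exact Hyx | apply le_refl] | exact Hmy].
  - intros ->. split; [split; [exact Hyx | apply le_refl]|].
    intros w (_ & Hwy) Hyw. now apply le_antisym.
Qed.

Lemma sasaki_eq_one_of_Max_unique x y m :
  (forall n, Max (Lb x y) n <-> n = m) ->
  eq_one (sasaki x y) <-> is_join (cpl x) m one.
Proof.
  intros Hm. split.
  - intros Hone. destruct (proj2 (Hone one) eq_refl) as (n & Hn & Hj).
    now rewrite <- (proj1 (Hm n) Hn).
  - intros Hj z. split.
    + intros (n & Hn & Hz). rewrite (proj1 (Hm n) Hn) in Hz.
      exact (is_join_unique _ _ _ _ Hz Hj).
    + intros ->. exists m. split; [now apply Hm | exact Hj].
Qed.

Lemma sasaki_eq_one_of_le x y :
  le x y -> eq_one (sasaki x y) <-> is_join (cpl x) x one.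
Proof. intros Hxy. apply sasaki_eq_one_of_Max_unique. intros n. now apply Max_Lb_of_le. Qed.

Lemma sasaki_eq_one_of_ge x y :
  le y x -> eq_one (sasaki x y) <-> is_join (cpl x) y one.
Proof. intros Hyx. apply sasaki_eq_one_of_Max_unique. intros n. now apply Max_Lb_of_ge. Qed.

Lemma sasaki_le_iff_dishkant_le :
  (forall x y : P, le x y <-> eq_one (sasaki x y)) <->
  (forall x y : P, le x y <-> eq_one (dishkant x y)).
Proof.
  unfold dishkant. split.
  - intros Hs x y. now rewrite <- Hs, le_cpl.
  - intros Hd x y. rewrite <- (cpl_invol _ x), <- (cpl_invol _ y) at 2.
    now rewrite <- Hd, le_cpl.
Qed.

End BoundedPosetWithInvolution.

Section Orthomodular.
Context {P : bposet_ai}.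
Implicit Types m x y : P.

Lemma lub_complete_Max_Lb : lub_complete P -> forall x y : P, exists m, Max (Lb x y) m.
Proof.
  intros Hlub x y.
  destruct (Hlub [x; y] zero) as (m & ((Hlb & Hmax) & _)); [intros; apply zero_le|].
  exists m. split; [split; apply Hlb; simpl; auto|].
  intros w (Hwx & Hwy) Hmw. apply Hmax; [|exact Hmw].
  intros k [<- | [<- | []]]; assumption.
Qed.

Lemma sasaki_eq_one_witness : orthogonal P -> lub_complete P ->
  forall x y : P, eq_one (sasaki x y) ->
  exists m, Max (Lb x y) m /\ is_join (cpl x) m one.
Proof.
  intros Hort Hlub x y Hone.
  destruct (lub_complete_Max_Lb Hlub x y) as (m & Hm).
  destruct (Hort (cpl x) m) as (z & Hz).
  { apply cpl_anti, Hm. }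
  exists m. split; [exact Hm|].
  now rewrite <- (proj1 (Hone z) (ex_intro _ m (conj Hm Hz))).
Qed.

Lemma orthomodular_join_cpl : orthomodular P -> forall x : P, is_join (cpl x) x one.
Proof.
  intros (_ & Hom) x.
  destruct (Hom x one (le_one _ x)) as (m & (Hm1 & Hmx & Hm) & Hj).
  replace m with (cpl x) in Hj by (apply le_antisym; auto using le_one, le_refl).
  now apply is_join_comm.
Qed.

Lemma orthomodular_eq_of_join_one : orthomodular P ->
  forall m x : P, le m x -> is_join (cpl x) m one -> m = x.
Proof.
  intros (_ & Hom) m x Hmx Hone.
  destruct (Hom m x Hmx) as (k & (Hkx & Hkm & _) & (_ & _ & Hj)).
  assert (Hk : k = zero).
  { apply (eq_zero_of_le_cpl_join_one _ _ _ Hone); [now rewrite cpl_invol | exact Hkm]. }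
  subst k. apply le_antisym; [exact Hmx|].
  apply Hj; [apply le_refl | apply zero_le].
Qed.

Lemma orthomodular_sasaki_le : orthomodular P -> lub_complete P ->
  forall x y : P, le x y <-> eq_one (sasaki x y).
Proof.
  intros Hom Hlub x y. split.
  - intros Hxy. apply (sasaki_eq_one_of_le _ _ Hxy), (orthomodular_join_cpl Hom).
  - intros Hone.
    destruct (sasaki_eq_one_witness (proj1 Hom) Hlub x y Hone)
      as (m & ((Hmx & Hmy) & _) & Hj).
    now rewrite <- (orthomodular_eq_of_join_one Hom m x Hmx Hj).
Qed.

Lemma sasaki_le_orthomodular : orthogonal P ->
  (forall x y : P, le x y <-> eq_one (sasaki x y)) -> orthomodular P.
Proof.
  intros Hort Hs. split; [exact Hort|].
  assert (Hcompl : forall a : P, is_join (cpl a) a one).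
  { intros a. now apply (sasaki_eq_one_of_le _ _ (le_refl _ a)), Hs, le_refl. }
  intros x y Hxy.
  destruct (Hort (cpl y) x) as (s & Hs_join).
  { now apply le_cpl. }
  set (m := cpl s).
  assert (Hmeet : is_meet y (cpl x) m).
  { pose proof (is_meet_cpl_join _ _ _ Hs_join) as H. now rewrite cpl_invol in H. }
  destruct (Hort x m) as (j & Hj).
  { apply le_cpl_r, Hmeet. }
  assert (Hjy : le j y) by (apply Hj; [exact Hxy | apply Hmeet]).
  assert (Hone : is_join (cpl y) j one).
  { apply (is_join_assoc _ _ _ _ _ _ Hs_join Hj).
    pose proof (Hcompl m) as H. unfold m in H at 1. now rewrite cpl_invol in H. }
  assert (Hyj : le y j) by (apply Hs, (sasaki_eq_one_of_ge _ _ Hjy), Hone).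
  replace j with y in Hj by (now apply le_antisym).
  now exists m.
Qed.

End Orthomodular.

Theorem theorem9 (P : bposet_ai) (Hort : orthogonal P) (Hlub : lub_complete P) :
  (orthomodular P <-> (forall x y : P, le x y <-> eq_one (sasaki x y))) /\
  (orthomodular P <-> (forall x y : P, le x y <-> eq_one (dishkant x y))).
Proof.
  assert (Hsasaki : orthomodular P <-> (forall x y : P, le x y <-> eq_one (sasaki x y))).
  { split.
    - intros Hom. exact (orthomodular_sasaki_le Hom Hlub).
    - exact (sasaki_le_orthomodular Hort). }
  split; [exact Hsasaki|].
  rewrite Hsasaki. apply sasaki_le_iff_dishkant_le.
Qed.
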